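(* For every extended pseudometric space $(S,d)$ there exists a 2-weighted 2-category $(\mathsf C,\mathrm W)$ with $\mathsf C_0=S$ such that $d_{\mathsf C,\mathrm W}=d$.
   Context: An extended pseudometric on $S$ is $d:S\times S\to[0,\infty]$ with $d(x,x)=0$, symmetry, and the triangle inequality. A 2-weighted 2-category is a strict 2-category $\mathsf C$ with functions $\mathrm W_1$ on 1-morphisms and $\mathrm W_2$ on 2-morphisms, valued in $\mathbb R_{\ge0}$ (allowing the value $\infty$ is not needed beyond what the statement requires; values in $[0,\infty]$ are permitted), vanishing on identity 1- and 2-morphisms, subadditive under composition of 1-morphisms and under vertical and horizontal composition of 2-morphisms. Its interleaving distance is $d_{\mathsf C,\mathrm W}(A,B)=\inf\{t\ge0\}$ over $t$ for which there exist $g:A\to B$, $h:B\to A$, $\alpha:1_A\Rightarrow hg$, $\beta:1_B\Rightarrow gh$ with $\max\{\mathrm W_1(g),\mathrm W_1(h),\mathrm W_2(\alpha),\mathrm W_2(\beta)\}\le t$ (infimum of the empty set is $\infty$). *)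

From HB Require Import structures.
From mathcomp Require Import all_boot all_order all_algebra.
From mathcomp Require Import boolp classical_sets reals constructive_ereal ereal.
From Stdlib Require Import JMeq.
Set Implicit Arguments. Unset Strict Implicit. Unset Printing Implicit Defensive.
Import Order.TTheory GRing.Theory Num.Theory.
Local Open Scope classical_set_scope.
Local Open Scope ring_scope.

Definition ext_pseudometric (R : realType) (S : Type) (d : S -> S -> \bar R) : Prop :=
  [/\ (forall x, d x x = 0%E),
      (forall x y, (0 <= d x y)%E),
      (forall x y, d x y = d y x) &
      (forall x y z, (d x z <= d x y + d y z)%E)].

(* A strict 2-category with object type Ob.
   1-composition is written in diagrammatic order: comp1 g h = h ∘ g.
   Laws between 2-morphisms living over propositionally (not definitionally)
   equal 1-morphisms are stated with heterogeneous equality JMeq. *)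
Record TwoCat (Ob : Type) := {
  Hom : Ob -> Ob -> Type;
  id1 : forall A, Hom A A;
  comp1 : forall A B C, Hom A B -> Hom B C -> Hom A C;
  comp1_id1l : forall A B (f : Hom A B), comp1 (id1 A) f = f;
  comp1_id1r : forall A B (f : Hom A B), comp1 f (id1 B) = f;
  comp1_assoc : forall A B C D (f : Hom A B) (g : Hom B C) (h : Hom C D),
      comp1 (comp1 f g) h = comp1 f (comp1 g h);
  Two : forall A B, Hom A B -> Hom A B -> Type;
  id2 : forall A B (f : Hom A B), Two f f;
  vcomp : forall A B (f g h : Hom A B), Two f g -> Two g h -> Two f h;
  hcomp : forall A B C (f f' : Hom A B) (g g' : Hom B C),
      Two f f' -> Two g g' -> Two (comp1 f g) (comp1 f' g');
  vcomp_id2l : forall A B (f g : Hom A B) (a : Two f g), vcomp (id2 f) a = a;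
  vcomp_id2r : forall A B (f g : Hom A B) (a : Two f g), vcomp a (id2 g) = a;
  vcomp_assoc : forall A B (f g h k : Hom A B) (a : Two f g) (b : Two g h) (c : Two h k),
      vcomp (vcomp a b) c = vcomp a (vcomp b c);
  hcomp_id2l : forall A B (f f' : Hom A B) (a : Two f f'),
      JMeq (hcomp (id2 (id1 A)) a) a;
  hcomp_id2r : forall A B (f f' : Hom A B) (a : Two f f'),
      JMeq (hcomp a (id2 (id1 B))) a;
  hcomp_assoc : forall A B C D (f f' : Hom A B) (g g' : Hom B C) (h h' : Hom C D)
      (a : Two f f') (b : Two g g') (c : Two h h'),
      JMeq (hcomp (hcomp a b) c) (hcomp a (hcomp b c));
  hcomp_id2 : forall A B C (f : Hom A B) (g : Hom B C),
      hcomp (id2 f) (id2 g) = id2 (comp1 f g);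
  interchange : forall A B C (f f' f'' : Hom A B) (g g' g'' : Hom B C)
      (a : Two f f') (a' : Two f' f'') (b : Two g g') (b' : Two g' g''),
      vcomp (hcomp a b) (hcomp a' b') = hcomp (vcomp a a') (vcomp b b')
}.

Arguments id1 {Ob} _ A.
Arguments comp1 {Ob} _ {A B C}.
Arguments Two {Ob} _ {A B}.
Arguments id2 {Ob} _ {A B}.
Arguments vcomp {Ob} _ {A B f g h}.
Arguments hcomp {Ob} _ {A B C f f' g g'}.

Record Weight2 (R : realType) (Ob : Type) (C : TwoCat Ob) := {
  W1 : forall A B, Hom C A B -> \bar R;
  W2 : forall A B (f g : Hom C A B), Two C f g -> \bar R;
  W1_ge0 : forall A B (f : Hom C A B), (0 <= W1 f)%E;
  W2_ge0 : forall A B (f g : Hom C A B) (a : Two C f g), (0 <= W2 a)%E;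
  W1_id : forall A, W1 (id1 C A) = 0%E;
  W2_id : forall A B (f : Hom C A B), W2 (id2 C f) = 0%E;
  W1_comp : forall A B D (f : Hom C A B) (g : Hom C B D),
      (W1 (comp1 C f g) <= W1 f + W1 g)%E;
  W2_vcomp : forall A B (f g h : Hom C A B) (a : Two C f g) (b : Two C g h),
      (W2 (vcomp C a b) <= W2 a + W2 b)%E;
  W2_hcomp : forall A B D (f f' : Hom C A B) (g g' : Hom C B D)
      (a : Two C f f') (b : Two C g g'),
      (W2 (hcomp C a b) <= W2 a + W2 b)%E
}.

Arguments W1 {R Ob C} _ {A B}.
Arguments W2 {R Ob C} _ {A B f g}.

(* Interleaving distance: inf over real t >= 0 admitting g : A -> B, h : B -> A,
   alpha : 1_A => h g, beta : 1_B => g h, all of weight <= t.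
   (ereal_inf of the empty set is +oo.) *)
Definition interleaving_dist (R : realType) (Ob : Type) (C : TwoCat Ob)
    (W : Weight2 R C) (A B : Ob) : \bar R :=
  ereal_inf [set (t%:E)%E | t in
    [set t : R | 0 <= t /\
      exists (g : Hom C A B) (h : Hom C B A)
             (alpha : Two C (id1 C A) (comp1 C g h))
             (beta : Two C (id1 C B) (comp1 C h g)),
        [/\ (W1 W g <= t%:E)%E, (W1 W h <= t%:E)%E,
            (W2 W alpha <= t%:E)%E & (W2 W beta <= t%:E)%E]]].

From mathcomp Require Import all_boot all_order all_algebra.
From mathcomp Require Import boolp classical_sets reals constructive_ereal ereal.
From Stdlib Require Import JMeq.
Set Implicit Arguments. Unset Strict Implicit. Unset Printing Implicit Defensive.
Import Order.TTheory GRing.Theory Num.Theory.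
Local Open Scope classical_set_scope.
Local Open Scope ring_scope.

(* Take the indiscrete 2-category on S (exactly one 1-morphism between any two
   points and one 2-cell between any two parallel 1-morphisms), weigh the
   1-morphism A -> B by d A B and every 2-cell by 0.  Subadditivity of W1 is
   the triangle inequality, every pair of points is interleaved by the unique
   data, and its weight max (d A B) (d B A) is d A B by symmetry. *)

Definition indiscrete_twocat (S : Type) : TwoCat S.
Proof.
refine (@Build_TwoCat S (fun _ _ => unit) (fun _ => tt) (fun _ _ _ _ _ => tt)
  _ _ _ (fun _ _ _ _ => unit) (fun _ _ _ => tt) (fun _ _ _ _ _ _ _ => tt)
  (fun _ _ _ _ _ _ _ _ _ => tt) _ _ _ _ _ _ _ _).
all: by move=> *; repeat match goal with u : unit |- _ => case: u end.
Defined.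

Lemma ereal_inf_nonneg_ge (R : realType) (x : \bar R) : (0 <= x)%E ->
  ereal_inf [set t%:E | t in [set t : R | 0 <= t /\ (x <= t%:E)%E]] = x.
Proof.
move=> x_ge0; apply/le_anti/andP; split.
- case: x x_ge0 => [r | | ] //= r_ge0; last by rewrite leey.
  by apply: ereal_inf_lbound; exists r; rewrite -?lee_fin.
- by apply: le_ereal_inf_tmp => _ [t [_ x_le_t] <-].
Qed.

Section MetricWeight.
Variables (R : realType) (S : Type) (d : S -> S -> \bar R).
Hypothesis hd : ext_pseudometric d.

Definition metric_weight : Weight2 R (indiscrete_twocat S).
Proof.
refine (@Build_Weight2 R S (indiscrete_twocat S) (fun A B _ => d A B)
  (fun _ _ _ _ _ => 0%E) _ _ _ _ _ _ _).
all: case: hd => d0 d_ge0 _ d_tri; by move=> * /=; rewrite ?adde0.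
Defined.

Lemma interleaving_dist_metric_weight (A B : S) :
  interleaving_dist metric_weight A B = d A B.
Proof.
case: hd => _ d_ge0 d_sym _.
rewrite -[RHS]ereal_inf_nonneg_ge //; congr (ereal_inf [set _%:E | _ in _]).
apply/seteqP; split=> t [t_ge0 interleaved]; split=> //.
- by case: interleaved => g [h [alpha [beta []]]].
- by exists tt, tt, tt, tt; rewrite /= [d B A]d_sym lee_fin.
Qed.

End MetricWeight.

Theorem corollary5p5 (R : realType) (S : Type) (d : S -> S -> \bar R) :
  ext_pseudometric d ->
  exists (C : TwoCat S) (W : Weight2 R C),
    forall A B : S, interleaving_dist W A B = d A B.
Proof.
move=> hd; exists (indiscrete_twocat S), (metric_weight hd).
by move=> A B; apply: interleaving_dist_metric_weight.
Qed.
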